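(* Let $S_1=(-y+x^2-y^2)\frac{\partial}{\partial x}+x(1+2y)\frac{\partial}{\partial y}$, let $H_1(x,y)=\frac{x^2+y^2}{1+2y}$, and for $\epsilon\in\mathbb{R}$ let $$\Phi_{1,\epsilon}(x,y)=\left(\frac{-2\epsilon x^{2}+(1-\epsilon^{2})x-2\epsilon y^{2}-2\epsilon y}{D(x,y)},\ \frac{-2\epsilon^{2}x^{2}+2\epsilon x-2\epsilon^{2}y^{2}+(1-\epsilon^{2})y}{D(x,y)}\right),$$ $D(x,y)=4\epsilon^{2}x^{2}+4\epsilon^{2}y^{2}+4\epsilon^{2}y+\epsilon^{2}-4\epsilon x+1$, be the KHK map of $S_1$. Let $Y_1=x(1+2y)\frac{\partial}{\partial x}+(y-x^2+y^2)\frac{\partial}{\partial y}$ and let $\Psi_{1,\delta}$ be the KHK map of $Y_1$ with step $\delta$. Then: (a) $H_1$ is a first integral of $\Phi_{1,\epsilon}$; (b) $S_1$ is a Lie symmetry of $\Phi_{1,\epsilon}$; (c) $\Phi_{1,\epsilon}$ has an invariant measure with density $\nu=1/(1+2y)^2$; (d) for all $\epsilon,\delta\in\mathbb{R}$, $\Psi_{1,\delta}\circ\Phi_{1,\epsilon}=\Phi_{1,\epsilon}\circ\Psi_{1,\delta}$.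
   Context: The KHK map with step $\epsilon$ of a quadratic planar vector field $X$ is $\mathbf{x}\mapsto\mathbf{x}+2\epsilon\left(I-\epsilon\,\mathrm{D}X(\mathbf{x})\right)^{-1}X(\mathbf{x})$, where $\mathrm{D}X$ is the Jacobian matrix of $X$. A function $H$ is a first integral of a map $F$ if $H\circ F=H$. A vector field $X$ is a Lie symmetry of $F$ if $X(F(\mathbf{x}))=DF(\mathbf{x})\,X(\mathbf{x})$. *)

From Stdlib Require Import Reals.
From Coquelicot Require Import Coquelicot.
Open Scope R_scope.

Definition J11 (F : R -> R -> R * R) (x y : R) : R := Derive (fun t => fst (F t y)) x.
Definition J12 (F : R -> R -> R * R) (x y : R) : R := Derive (fun t => fst (F x t)) y.
Definition J21 (F : R -> R -> R * R) (x y : R) : R := Derive (fun t => snd (F t y)) x.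
Definition J22 (F : R -> R -> R * R) (x y : R) : R := Derive (fun t => snd (F x t)) y.

Definition jdet (F : R -> R -> R * R) (x y : R) : R :=
  J11 F x y * J22 F x y - J12 F x y * J21 F x y.

(* det (I - eps DX(x,y)); the KHK map is defined where this is nonzero. *)
Definition khk_det (eps : R) (X : R -> R -> R * R) (x y : R) : R :=
  (1 - eps * J11 X x y) * (1 - eps * J22 X x y) - eps ^ 2 * J12 X x y * J21 X x y.

(* KHK map: p |-> p + 2 eps (I - eps DX(p))^{-1} X(p), with the 2x2 inverse
   written out as adjugate / determinant. *)
Definition khk (eps : R) (X : R -> R -> R * R) (x y : R) : R * R :=
  let v1 := fst (X x y) in
  let v2 := snd (X x y) in
  let d := khk_det eps X x y in
  (x + 2 * eps * ((1 - eps * J22 X x y) * v1 + eps * J12 X x y * v2) / d,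
   y + 2 * eps * (eps * J21 X x y * v1 + (1 - eps * J11 X x y) * v2) / d).

Definition S1 (x y : R) : R * R := (- y + x ^ 2 - y ^ 2, x * (1 + 2 * y)).

Definition H1 (x y : R) : R := (x ^ 2 + y ^ 2) / (1 + 2 * y).

Definition nu1 (x y : R) : R := 1 / (1 + 2 * y) ^ 2.

Definition Dphi (eps x y : R) : R :=
  4 * eps ^ 2 * x ^ 2 + 4 * eps ^ 2 * y ^ 2 + 4 * eps ^ 2 * y + eps ^ 2 - 4 * eps * x + 1.

Definition Phi1 (eps : R) (x y : R) : R * R :=
  ((- 2 * eps * x ^ 2 + (1 - eps ^ 2) * x - 2 * eps * y ^ 2 - 2 * eps * y) / Dphi eps x y,
   (- 2 * eps ^ 2 * x ^ 2 + 2 * eps * x - 2 * eps ^ 2 * y ^ 2 + (1 - eps ^ 2) * y) / Dphi eps x y).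

Definition Y1 (x y : R) : R * R := (x * (1 + 2 * y), y - x ^ 2 + y ^ 2).

Definition Psi1 (delta : R) (x y : R) : R * R := khk delta Y1 x y.

Definition lie_symmetry_at (X F : R -> R -> R * R) (x y : R) : Prop :=
  let p := F x y in
  fst (X (fst p) (snd p)) = J11 F x y * fst (X x y) + J12 F x y * snd (X x y) /\
  snd (X (fst p) (snd p)) = J21 F x y * fst (X x y) + J22 F x y * snd (X x y).

Definition inv_measure_at (nu : R -> R -> R) (F : R -> R -> R * R) (x y : R) : Prop :=
  nu (fst (F x y)) (snd (F x y)) * jdet F x y = nu x y.

From Stdlib Require Import Reals Lra.
From Coquelicot Require Import Coquelicot.
Open Scope R_scope.

(* In the complex coordinate z = x + i y both fields are holomorphic: S_1 is
   z' = z^2 + i z and Y_1 = -i S_1.  So their Jacobians act as multiplication by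
   a complex derivative, and their KHK maps are the Moebius maps
   z |-> (1 + i w) z / (1 - i w - 2 w z), with complex step w = eps for
   Phi_{1,eps} and w = -i delta for Psi_{1,delta}.  Their matrices I + w N, with
   N = [[i, 0], [-2, -i]], pairwise commute, which gives (d).  For (a) and (c):
   |Phi(z)|^2 = (1 + eps^2) |z|^2 / D, 1 + 2 Im Phi(z) = (1 + eps^2) (1 + 2 y) / D,
   and |Phi'(z)|^2 = ((1 + eps^2) / D)^2 is the Jacobian determinant. *)

Lemma Dphi_sum_squares eps x y :
  Dphi eps x y = (1 - 2 * eps * x) ^ 2 + (eps * (1 + 2 * y)) ^ 2.
Proof. unfold Dphi. ring. Qed.

(* Real and imaginary parts of Phi'(z) = (1 + eps^2) / (1 - i eps - 2 eps z)^2. *)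
Definition dPhi1_re (eps x y : R) : R :=
  (1 + eps ^ 2) * ((1 - 2 * eps * x) ^ 2 - (eps * (1 + 2 * y)) ^ 2) / Dphi eps x y ^ 2.

Definition dPhi1_im (eps x y : R) : R :=
  2 * (1 + eps ^ 2) * (1 - 2 * eps * x) * (eps * (1 + 2 * y)) / Dphi eps x y ^ 2.

Lemma one_plus_sqr_neq0 (r : R) : 1 + r ^ 2 <> 0.
Proof. pose proof (pow2_ge_0 r). lra. Qed.

Section Phi1_at_point.

Variables eps x y : R.
Hypothesis HD : Dphi eps x y <> 0.

Lemma J11_Phi1 : J11 (Phi1 eps) x y = dPhi1_re eps x y.
Proof.
  unfold J11, Phi1, dPhi1_re; simpl. apply is_derive_unique.
  unfold Dphi in *. auto_derive; [exact HD|]. field. exact HD.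
Qed.

Lemma J12_Phi1 : J12 (Phi1 eps) x y = - dPhi1_im eps x y.
Proof.
  unfold J12, Phi1, dPhi1_im; simpl. apply is_derive_unique.
  unfold Dphi in *. auto_derive; [exact HD|]. field. exact HD.
Qed.

Lemma J21_Phi1 : J21 (Phi1 eps) x y = dPhi1_im eps x y.
Proof.
  unfold J21, Phi1, dPhi1_im; simpl. apply is_derive_unique.
  unfold Dphi in *. auto_derive; [exact HD|]. field. exact HD.
Qed.

Lemma J22_Phi1 : J22 (Phi1 eps) x y = dPhi1_re eps x y.
Proof.
  unfold J22, Phi1, dPhi1_re; simpl. apply is_derive_unique.
  unfold Dphi in *. auto_derive; [exact HD|]. field. exact HD.
Qed.

Lemma jdet_Phi1 : jdet (Phi1 eps) x y = ((1 + eps ^ 2) / Dphi eps x y) ^ 2.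
Proof.
  unfold jdet. rewrite J11_Phi1, J12_Phi1, J21_Phi1, J22_Phi1.
  unfold dPhi1_re, dPhi1_im. rewrite Dphi_sum_squares in *. field. exact HD.
Qed.

Lemma Phi1_norm2 :
  fst (Phi1 eps x y) ^ 2 + snd (Phi1 eps x y) ^ 2 = (1 + eps ^ 2) * (x ^ 2 + y ^ 2) / Dphi eps x y.
Proof. unfold Phi1; simpl. unfold Dphi in *. field. exact HD. Qed.

Lemma Phi1_shift :
  1 + 2 * snd (Phi1 eps x y) = (1 + eps ^ 2) * (1 + 2 * y) / Dphi eps x y.
Proof. unfold Phi1; simpl. unfold Dphi in *. field. exact HD. Qed.

Lemma S1_lie_symmetry_Phi1 : lie_symmetry_at S1 (Phi1 eps) x y.
Proof.
  unfold lie_symmetry_at. rewrite J11_Phi1, J12_Phi1, J21_Phi1, J22_Phi1.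
  unfold S1, Phi1, dPhi1_re, dPhi1_im; simpl. unfold Dphi in *. split; field; exact HD.
Qed.

Hypothesis Hy : 1 + 2 * y <> 0.

Lemma H1_Phi1 : H1 (fst (Phi1 eps x y)) (snd (Phi1 eps x y)) = H1 x y.
Proof.
  unfold H1. rewrite Phi1_norm2, Phi1_shift. field.
  repeat split; auto using one_plus_sqr_neq0.
Qed.

Lemma nu1_inv_measure_Phi1 : inv_measure_at nu1 (Phi1 eps) x y.
Proof.
  unfold inv_measure_at, nu1. rewrite jdet_Phi1, Phi1_shift. field.
  repeat split; auto using one_plus_sqr_neq0.
Qed.

End Phi1_at_point.

(* [khk_riccati w] is the KHK map z |-> z + 2 w f(z) / (1 - w f'(z)) of
   f(z) = z^2 + i z with complex step w. *)
Definition khk_riccati_den (w z : C) : C := (1 - Ci * w - RtoC 2 * w * z)%C.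

Definition khk_riccati (w z : C) : C := ((1 + Ci * w) * z / khk_riccati_den w z)%C.

Lemma khk_riccati_comp (w w' z : C) :
  khk_riccati_den w' z <> 0%C -> khk_riccati_den w (khk_riccati w' z) <> 0%C ->
  khk_riccati w (khk_riccati w' z) =
  ((1 + Ci * w) * (1 + Ci * w') * z /
   ((1 - Ci * w) * (1 - Ci * w') - RtoC 2 * (w + w') * z))%C.
Proof.
  intros Hw' Hw.
  assert (Eden : (khk_riccati_den w (khk_riccati w' z) * khk_riccati_den w' z =
                  (1 - Ci * w) * (1 - Ci * w') - RtoC 2 * (w + w') * z)%C).
  { unfold khk_riccati, khk_riccati_den. field. exact Hw'. }
  rewrite <- Eden. unfold khk_riccati. field. split; assumption.
Qed.

Lemma khk_riccati_comm (w w' z : C) :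
  khk_riccati_den w z <> 0%C -> khk_riccati_den w' z <> 0%C ->
  khk_riccati_den w (khk_riccati w' z) <> 0%C ->
  khk_riccati_den w' (khk_riccati w z) <> 0%C ->
  khk_riccati w (khk_riccati w' z) = khk_riccati w' (khk_riccati w z).
Proof.
  intros. rewrite !khk_riccati_comp by assumption.
  rewrite (Cplus_comm w'). f_equal; ring.
Qed.

Lemma khk_riccati_eq_mul (w z p : C) :
  khk_riccati_den w z <> 0%C -> (p * khk_riccati_den w z = (1 + Ci * w) * z)%C ->
  khk_riccati w z = p.
Proof. intros Hden Hp. unfold khk_riccati. rewrite <- Hp. field. exact Hden. Qed.

Lemma Cmod_khk_riccati_den_Phi1 eps x y :
  Cmod (khk_riccati_den (RtoC eps) (x, y)) ^ 2 = Dphi eps x y.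
Proof.
  rewrite Cmod2_alt. unfold khk_riccati_den, Cminus, Cplus, Cmult, Copp, Ci, RtoC, Re, Im; simpl.
  unfold Dphi. ring.
Qed.

Lemma khk_riccati_den_Phi1_neq0 eps x y :
  Dphi eps x y <> 0 -> khk_riccati_den (RtoC eps) (x, y) <> 0%C.
Proof.
  intros HD E. apply HD. rewrite <- Cmod_khk_riccati_den_Phi1, E, Cmod_0. ring.
Qed.

Lemma Phi1_khk_riccati eps x y :
  Dphi eps x y <> 0 -> Phi1 eps x y = khk_riccati (RtoC eps) (x, y).
Proof.
  intro HD. symmetry. apply khk_riccati_eq_mul; [exact (khk_riccati_den_Phi1_neq0 _ _ _ HD)|].
  unfold khk_riccati_den, Cminus, Cplus, Cmult, Copp, Ci, RtoC, Phi1; simpl.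
  unfold Dphi in *. f_equal; field; exact HD.
Qed.

Lemma J11_Y1 x y : J11 Y1 x y = 1 + 2 * y.
Proof. unfold J11, Y1; simpl. apply is_derive_unique. auto_derive; [exact I|]. ring. Qed.

Lemma J12_Y1 x y : J12 Y1 x y = 2 * x.
Proof. unfold J12, Y1; simpl. apply is_derive_unique. auto_derive; [exact I|]. ring. Qed.

Lemma J21_Y1 x y : J21 Y1 x y = - (2 * x).
Proof. unfold J21, Y1; simpl. apply is_derive_unique. auto_derive; [exact I|]. ring. Qed.

Lemma J22_Y1 x y : J22 Y1 x y = 1 + 2 * y.
Proof. unfold J22, Y1; simpl. apply is_derive_unique. auto_derive; [exact I|]. ring. Qed.

Lemma khk_det_Y1 delta x y :
  khk_det delta Y1 x y = (1 - delta * (1 + 2 * y)) ^ 2 + (2 * delta * x) ^ 2.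
Proof. unfold khk_det. rewrite J11_Y1, J12_Y1, J21_Y1, J22_Y1. ring. Qed.

Lemma Cmod_khk_riccati_den_Psi1 delta x y :
  Cmod (khk_riccati_den (- (Ci * RtoC delta)) (x, y)) ^ 2 = khk_det delta Y1 x y.
Proof.
  rewrite Cmod2_alt, khk_det_Y1.
  unfold khk_riccati_den, Cminus, Cplus, Cmult, Copp, Ci, RtoC, Re, Im; simpl. ring.
Qed.

Lemma khk_riccati_den_Psi1_neq0 delta x y :
  khk_det delta Y1 x y <> 0 -> khk_riccati_den (- (Ci * RtoC delta)) (x, y) <> 0%C.
Proof.
  intros HK E. apply HK. rewrite <- Cmod_khk_riccati_den_Psi1, E, Cmod_0. ring.
Qed.

Lemma Psi1_khk_riccati delta x y :
  khk_det delta Y1 x y <> 0 -> Psi1 delta x y = khk_riccati (- (Ci * RtoC delta)) (x, y).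
Proof.
  intro HK. symmetry. apply khk_riccati_eq_mul; [exact (khk_riccati_den_Psi1_neq0 _ _ _ HK)|].
  unfold Psi1, khk, khk_det in *. rewrite !J11_Y1, !J12_Y1, !J21_Y1, !J22_Y1 in *.
  unfold khk_riccati_den, Cminus, Cplus, Cmult, Copp, Ci, RtoC, Y1; cbn [fst snd].
  f_equal; field; exact HK.
Qed.

Lemma Psi1_Phi1_comm eps delta x y :
  Dphi eps x y <> 0 -> khk_det delta Y1 x y <> 0 ->
  khk_det delta Y1 (fst (Phi1 eps x y)) (snd (Phi1 eps x y)) <> 0 ->
  Dphi eps (fst (Psi1 delta x y)) (snd (Psi1 delta x y)) <> 0 ->
  Psi1 delta (fst (Phi1 eps x y)) (snd (Phi1 eps x y)) =
  Phi1 eps (fst (Psi1 delta x y)) (snd (Psi1 delta x y)).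
Proof.
  intros HD HK HK' HD'.
  pose proof (khk_riccati_den_Psi1_neq0 _ _ _ HK') as HK'C.
  pose proof (khk_riccati_den_Phi1_neq0 _ _ _ HD') as HD'C.
  rewrite (Psi1_khk_riccati _ _ _ HK'), (Phi1_khk_riccati _ _ _ HD').
  rewrite <- !surjective_pairing in *.
  rewrite (Phi1_khk_riccati _ _ _ HD), (Psi1_khk_riccati _ _ _ HK) in *.
  apply khk_riccati_comm; auto using khk_riccati_den_Phi1_neq0, khk_riccati_den_Psi1_neq0.
Qed.

Theorem proposition8 :
  forall eps : R,
  (* (a) H_1 is a first integral of Phi_{1,eps} (wherever both sides are defined) *)
  (forall x y : R,
     Dphi eps x y <> 0 -> 1 + 2 * y <> 0 ->
     1 + 2 * snd (Phi1 eps x y) <> 0 ->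
     H1 (fst (Phi1 eps x y)) (snd (Phi1 eps x y)) = H1 x y) /\
  (* (b) S_1 is a Lie symmetry of Phi_{1,eps} *)
  (forall x y : R, Dphi eps x y <> 0 -> lie_symmetry_at S1 (Phi1 eps) x y) /\
  (* (c) invariant measure with density 1/(1+2y)^2 *)
  (forall x y : R,
     Dphi eps x y <> 0 -> 1 + 2 * y <> 0 ->
     1 + 2 * snd (Phi1 eps x y) <> 0 ->
     inv_measure_at nu1 (Phi1 eps) x y) /\
  (* (d) Psi_{1,delta} o Phi_{1,eps} = Phi_{1,eps} o Psi_{1,delta} *)
  (forall delta x y : R,
     Dphi eps x y <> 0 -> khk_det delta Y1 x y <> 0 ->
     khk_det delta Y1 (fst (Phi1 eps x y)) (snd (Phi1 eps x y)) <> 0 ->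
     Dphi eps (fst (Psi1 delta x y)) (snd (Psi1 delta x y)) <> 0 ->
     Psi1 delta (fst (Phi1 eps x y)) (snd (Phi1 eps x y)) =
     Phi1 eps (fst (Psi1 delta x y)) (snd (Psi1 delta x y))).
Proof.
  intro eps. split; [|split; [|split]].
  - intros x y HD Hy _. exact (H1_Phi1 eps x y HD Hy).
  - apply S1_lie_symmetry_Phi1.
  - intros x y HD Hy _. exact (nu1_inv_measure_Phi1 eps x y HD Hy).
  - apply Psi1_Phi1_comm.
Qed.
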